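(* Let $c$ be a natural number and let $\phi$ be a function that assigns to every $m$-input/$m$-output conditional distribution $p(y^{(1)},\dots,y^{(m)}\mid x^{(1)},\dots,x^{(m)})$ on finite sets, together with a set $\Psi$ of distributions on its input alphabet $\mathcal{X}^{(1)}\times\cdots\times\mathcal{X}^{(m)}$, a subset $\phi(p,\Psi)\subseteq\mathbb{R}_+^c$, and suppose $\phi$ satisfies: (1) If $p(y^{(1)}y'^{(1)},\dots,y^{(m)}y'^{(m)}\mid x^{(1)},\dots,x^{(m)})=p(y^{(1)},\dots,y^{(m)}\mid x^{(1)},\dots,x^{(m)})\,p(y'^{(1)},\dots,y'^{(m)}\mid x'^{(1)},\dots,x'^{(m)})$ where each $x'^{(i)}\in\mathcal{X}'^{(i)}$ is a deterministic function of $y^{(i)}$, then for every input distribution $q(x^{(1)},\dots,x^{(m)})$ and every set $\Psi$ of distributions on $\mathcal{X}'^{(1)}\times\cdots\times\mathcal{X}'^{(m)}$ containing the distribution of $(X'^{(1)},\dots,X'^{(m)})$ induced by $q$ and $p(y\mid x)$, \[\phi\big(p(y^{(1)}y'^{(1)},\dots,y^{(m)}y'^{(m)}\mid x),\{q\}\big)\subseteq\phi\big(p(y\mid x),\{q\}\big)\oplus\phi\big(p(y'\mid x'),\Psi\big);\] (2) If $p(y^{(1)},\dots,y^{(m)}\mid x^{(1)},\dots,x^{(m)})=\prod_{i=1}^m\mathbf{1}[y^{(i)}=x^{(i)}]$, then $\phi(p,\{q\})=\{0\}$ for every input distribution $q$; (3) If $p(z^{(1)},\dots,z^{(m)},y^{(1)},\dots,y^{(m)}\mid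 x)=p(y^{(1)},\dots,y^{(m)}\mid x)\prod_{i=1}^m p(z^{(i)}\mid y^{(i)})$, then for every input distribution $q$, $\phi(p(z^{(1)},\dots,z^{(m)}\mid x),\{q\})\subseteq\phi(p(y^{(1)},\dots,y^{(m)}\mid x),\{q\})$. Then for every multiterminal network $q(y^{(1)},\dots,y^{(m)}\mid x^{(1)},\dots,x^{(m)})$, every source $p(w^{(1)},\dots,w^{(m)})$, functions $f^{(i)}$, distortion functions $\Delta^{(i)}$ and levels $D^{(i)}$, every $\epsilon>0$, every $(n)$-code with $\mathbb{E}[\Delta^{(i)}_n(\widehat{M}^{(i)}_{1:n},M^{(i)}_{1:n})]\le D^{(i)}+\epsilon$ for all $i\in[m]$, and every permissible set $\Psi$ of input distributions, \[ \phi\Big(p(\widehat{m}^{(1)}_{1:n},\dots,\widehat{m}^{(m)}_{1:n}\mid w^{(1)}_{1:n},\dots,w^{(m)}_{1:n}),\ \{p(w^{(1)}_{1:n},\dots,w^{(m)}_{1:n})\}\Big)\subseteq n\times\mathrm{ConvexHull}\Big(\phi\big(q(y^{(1)},\dots,y^{(m)}\mid x^{(1)},\dots,x^{(m)}),\Psi\big)\Big), \] where $W^{(i)}_{1:n}$ are the source blocks observed at the nodes and $\widehat{M}^{(i)}_{1:n}=\vartheta^{(i)}(W^{(i)}_{1:n},Y^{(i)}_{1:n})$ are the reconstructions produced by the code.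
   Context: All alphabets are finite; $[k]=\{1,\dots,k\}$. For $K,L\subseteq\mathbb{R}_+^c$, $K\oplus L=\{v_1+v_2:v_1\in K,v_2\in L\}$ (Minkowski sum) and $r\times K=\{rv:v\in K\}$. A GMN is a conditional distribution $q(y^{(1)},\dots,y^{(m)}\mid x^{(1)},\dots,x^{(m)})$. Node $i$ observes i.i.d. repetitions of $W^{(i)}$, jointly distributed as $p(w^{(1)},\dots,w^{(m)})$, and wants $M^{(i)}=f^{(i)}(W^{(1)},\dots,W^{(m)})$; $\Delta^{(i)}$ is a distortion function with $\Delta^{(i)}(a,a)=0$ and $\Delta^{(i)}_n(m_{1:n},m'_{1:n})=\frac1n\sum_k\Delta^{(i)}(m_k,m'_k)$. An $(n)$-code consists of encoders $\zeta^{(i)}_1:(\mathcal{W}^{(i)})^n\to\mathcal{X}^{(i)}$, $\zeta^{(i)}_k:(\mathcal{W}^{(i)})^n\times(\mathcal{Y}^{(i)})^{k-1}\to\mathcal{X}^{(i)}$ ($2\le k\le n$) and decoders $\vartheta^{(i)}:(\mathcal{W}^{(i)})^n\times(\mathcal{Y}^{(i)})^n\to(\mathcal{M}^{(i)})^n$. In operation, the source letters are i.i.d. across time, $X^{(i)}_k=\zeta^{(i)}_k(W^{(i)}_{1:n},Y^{(i)}_{1:k-1})$, and given all past variables and the current inputs, $(Y^{(1)}_k,\dots,Y^{(m)}_k)$ is drawn from $q(\cdot\mid X^{(1)}_k,\dots,X^{(m)}_k)$; $M^{(i)}_k=f^{(i)}(W^{(1)}_k,\dots,W^{(m)}_k)$.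 A permissible set $\Psi$ is a set of joint distributions on $\mathcal{X}^{(1)}\times\cdots\times\mathcal{X}^{(m)}$ that, for the given network and source, contains the joint distribution of the channel inputs $(X^{(1)}_k,\dots,X^{(m)}_k)$ at every time $k$ for any code. *)

From HB Require Import structures.
From mathcomp Require Import all_boot all_order all_algebra.
From mathcomp Require Import boolp classical_sets.
Set Implicit Arguments. Unset Strict Implicit. Unset Printing Implicit Defensive.
Import Order.TTheory GRing.Theory Num.Theory.
Local Open Scope ring_scope.
Local Open Scope classical_set_scope.

Notation joint A := ({dffun forall i, A i}) (only parsing).

Definition pairF (m : nat) (A B : 'I_m -> finType) : 'I_m -> finType :=
  fun i => (A i * B i)%type.

Definition blockF (m n : nat) (A : 'I_m -> finType) : 'I_m -> finType :=
  fun i => {ffun 'I_n -> A i}.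

Section Probability.
Variable R : numDomainType.

Definition is_dist (T : finType) (d : {ffun T -> R}) : Prop :=
  (forall t, 0 <= d t) /\ \sum_(t : T) d t = 1.

Definition chan (A B : finType) := {ffun A -> {ffun B -> R}}.

Definition is_chan (A B : finType) (k : chan A B) : Prop :=
  forall a, is_dist (k a).
End Probability.

Section VecSets.
Variables (R : numDomainType) (c : nat).

Definition nonneg_vec (v : 'rV[R]_c) : Prop := forall j, 0 <= v ord0 j.

Definition msum (K L : set 'rV[R]_c) : set 'rV[R]_c :=
  [set v | exists v1 v2, K v1 /\ L v2 /\ v = v1 + v2].

Definition vscale (r : R) (K : set 'rV[R]_c) : set 'rV[R]_c :=
  [set v | exists2 u, K u & v = r *: u].

Definition conv_hull (K : set 'rV[R]_c) : set 'rV[R]_c :=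
  [set v | exists (k : nat) (w : 'I_k -> R) (u : 'I_k -> 'rV[R]_c),
     (forall j, 0 <= w j) /\ \sum_(j < k) w j = 1 /\
     (forall j, K (u j)) /\ v = \sum_(j < k) w j *: u j].
End VecSets.

Section PhiAxioms.
Variables (R : numDomainType) (m c : nat).

Definition phi_type :=
  forall X Y : 'I_m -> finType,
    chan R (joint X) (joint Y) -> set {ffun joint X -> R} -> set 'rV[R]_c.

Variable phi : phi_type.

Definition phi_nonneg : Prop :=
  forall (X Y : 'I_m -> finType) (k : chan R (joint X) (joint Y))
         (Psi : set {ffun joint X -> R}),
    phi k Psi `<=` @nonneg_vec R c.

Definition gmap (Y X' : 'I_m -> finType) (g : forall i, Y i -> X' i)
  (y : joint Y) : joint X' := finfun (fun i => g i (y i)).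

Definition fstJ (Y Y' : 'I_m -> finType) (yy : joint (pairF Y Y')) : joint Y :=
  finfun (fun i => (yy i).1).
Definition sndJ (Y Y' : 'I_m -> finType) (yy : joint (pairF Y Y')) : joint Y' :=
  finfun (fun i => (yy i).2).

Definition tensor_chan (X Y X' Y' : 'I_m -> finType)
  (k : chan R (joint X) (joint Y)) (k' : chan R (joint X') (joint Y'))
  (g : forall i, Y i -> X' i) : chan R (joint X) (joint (pairF Y Y')) :=
  [ffun x => [ffun yy => k x (fstJ yy) * k' (gmap g (fstJ yy)) (sndJ yy)]].

Definition induced_dist (X Y X' : 'I_m -> finType)
  (qd : {ffun joint X -> R}) (k : chan R (joint X) (joint Y))
  (g : forall i, Y i -> X' i) : {ffun joint X' -> R} :=
  [ffun x' => \sum_(x : joint X) qd x *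
                \sum_(y : joint Y) k x y * (gmap g y == x')%:R].

Definition phi_prop1 : Prop :=
  forall (X Y X' Y' : 'I_m -> finType)
         (k : chan R (joint X) (joint Y)) (k' : chan R (joint X') (joint Y'))
         (g : forall i, Y i -> X' i),
    is_chan k -> is_chan k' ->
    forall (qd : {ffun joint X -> R}), is_dist qd ->
    forall (Psi : set {ffun joint X' -> R}),
      (forall d, Psi d -> is_dist d) ->
      Psi (induced_dist qd k g) ->
      phi (tensor_chan k k' g) [set qd] `<=` msum (phi k [set qd]) (phi k' Psi).

Definition id_chan (X : 'I_m -> finType) : chan R (joint X) (joint X) :=
  [ffun x : joint X => [ffun y : joint X => \prod_(i < m) (y i == x i)%:R]].

Definition phi_prop2 : Prop :=
  forall (X : 'I_m -> finType) (qd : {ffun joint X -> R}), is_dist qd ->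
    phi (id_chan X) [set qd] = [set 0].

Definition post_chan (X Y Z : 'I_m -> finType)
  (k : chan R (joint X) (joint Y)) (r : forall i, chan R (Y i) (Z i)) :
  chan R (joint X) (joint Z) :=
  [ffun x : joint X => [ffun z : joint Z => \sum_(y : joint Y) k x y * \prod_(i < m) r i (y i) (z i)]].

Definition phi_prop3 : Prop :=
  forall (X Y Z : 'I_m -> finType)
         (k : chan R (joint X) (joint Y)) (r : forall i, chan R (Y i) (Z i)),
    is_chan k -> (forall i, is_chan (r i)) ->
    forall (qd : {ffun joint X -> R}), is_dist qd ->
      phi (post_chan k r) [set qd] `<=` phi k [set qd].
End PhiAxioms.

Section Network.
Variables (R : numDomainType) (m : nat).
Variables (W X Y M : 'I_m -> finType).
Variables (p : {ffun joint W -> R}) (q : chan R (joint X) (joint Y)).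

(* encoders zeta^(i)_k (W^(i)_{1:n}, Y^(i)_{1:n}) ; causality below says
   that zeta^(i)_k only depends on Y^(i)_{1:k-1} *)
Definition encoders (n : nat) :=
  forall i : 'I_m, 'I_n -> {ffun 'I_n -> W i} -> {ffun 'I_n -> Y i} -> X i.

Definition causal (n : nat) (enc : encoders n) : Prop :=
  forall (i : 'I_m) (k : 'I_n) (w : {ffun 'I_n -> W i}) (y y' : {ffun 'I_n -> Y i}),
    (forall j : 'I_n, (j < k)%N -> y j = y' j) -> enc i k w y = enc i k w y'.

Definition decoders (n : nat) :=
  forall i : 'I_m, {ffun 'I_n -> W i} -> {ffun 'I_n -> Y i} -> {ffun 'I_n -> M i}.

Definition blk (A : 'I_m -> finType) (n : nat) (s : {ffun 'I_n -> joint A})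
  (i : 'I_m) : {ffun 'I_n -> A i} := [ffun k => s k i].

Definition unblk (A : 'I_m -> finType) (n : nat) (b : joint (blockF n A)) :
  {ffun 'I_n -> joint A} := [ffun k => finfun (fun i => b i k)].

Definition xin (n : nat) (enc : encoders n) (wb : {ffun 'I_n -> joint W})
  (yb : {ffun 'I_n -> joint Y}) (k : 'I_n) : joint X :=
  finfun (fun i => enc i k (blk wb i) (blk yb i)).

Definition out_prob (n : nat) (enc : encoders n) (wb : {ffun 'I_n -> joint W})
  (yb : {ffun 'I_n -> joint Y}) : R :=
  \prod_(k < n) q (xin enc wb yb k) (yb k).

Definition proc_prob (n : nat) (enc : encoders n) (wb : {ffun 'I_n -> joint W})
  (yb : {ffun 'I_n -> joint Y}) : R :=
  (\prod_(k < n) p (wb k)) * out_prob enc wb yb.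

Definition input_dist (n : nat) (enc : encoders n) (k : 'I_n) :
  {ffun joint X -> R} :=
  [ffun x => \sum_(wb : {ffun 'I_n -> joint W}) \sum_(yb : {ffun 'I_n -> joint Y})
               proc_prob enc wb yb * (xin enc wb yb k == x)%:R].

Definition permissible (Psi : set {ffun joint X -> R}) : Prop :=
  (forall d, Psi d -> is_dist d) /\
  forall (n : nat) (enc : encoders n), causal enc ->
    forall k : 'I_n, Psi (input_dist enc k).

Definition block_source (n : nat) : {ffun joint (blockF n W) -> R} :=
  [ffun wn => \prod_(k < n) p (unblk wn k)].

Definition recon (n : nat) (dec : decoders n) (wn : joint (blockF n W))
  (yb : {ffun 'I_n -> joint Y}) : joint (blockF n M) :=
  finfun (fun i => dec i (wn i) (blk yb i)).

Definition code_chan (n : nat) (enc : encoders n) (dec : decoders n) :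
  chan R (joint (blockF n W)) (joint (blockF n M)) :=
  [ffun wn => [ffun mh => \sum_(yb : {ffun 'I_n -> joint Y})
      out_prob enc (unblk wn) yb * (recon dec wn yb == mh)%:R]].

Definition exp_distortion (n : nat) (enc : encoders n) (dec : decoders n)
  (f : forall i, joint W -> M i) (Delta : forall i, M i -> M i -> R)
  (i : 'I_m) : R :=
  \sum_(wn : joint (blockF n W)) block_source n wn *
    \sum_(mh : joint (blockF n M)) code_chan enc dec wn mh *
      (n%:R^-1 * \sum_(k < n) Delta i (mh i k) (f i (unblk wn k))).
End Network.

From HB Require Import structures.
From mathcomp Require Import all_boot all_order all_algebra.
From mathcomp Require Import boolp classical_sets reals.
Import Order.TTheory GRing.Theory Num.Theory.
Local Open Scope ring_scope.
Set Implicit Arguments. Unset Strict Implicit. Unset Printing Implicit Defensive.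

(* Unroll the code in time.  After k channel uses, the state of node i is its
   source block together with its k outputs, and the law of the joint state
   given the source blocks is a channel chain_k obtained from the identity
   channel by k tensorings with q, where the input letter fed to q at time k
   is a deterministic function (the encoder) of the current state.  Axiom (2)
   gives phi(chain_0) = {0}, axiom (1) adds one point of phi(q, Psi) per time
   step (the time-k input law is permissible), and the decoders form a
   node-wise post-processing of chain_n, so axiom (3) bounds phi of the code
   by a sum of n points of phi(q, Psi), i.e. by n times an average of them. *)

Section JointPairs.
Variables (R : numDomainType) (m : nat).

Definition pairJ (A B : 'I_m -> finType) (a : {dffun forall i, A i})
  (b : {dffun forall i, B i}) : {dffun forall i, pairF A B i} :=
  @finfun 'I_m (fun i => pairF A B i) (fun i => (a i, b i)).

Lemma fstJ_pair A B a b : fstJ (@pairJ A B a b) = a.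
Proof. by apply/ffunP => i; rewrite !ffunE. Qed.

Lemma sndJ_pair A B a b : sndJ (@pairJ A B a b) = b.
Proof. by apply/ffunP => i; rewrite !ffunE. Qed.

Lemma pairJ_fst_snd A B z : pairJ (@fstJ m A B z) (sndJ z) = z.
Proof. by apply/ffunP => i; rewrite !ffunE; case: (z i). Qed.

Lemma big_pairJ A B (F : {dffun forall i, pairF A B i} -> R) :
  \sum_z F z = \sum_(a : {dffun forall i, A i}) \sum_(b : {dffun forall i, B i})
                 F (pairJ a b).
Proof.
rewrite pair_big /= (reindex (fun ab => pairJ ab.1 ab.2)) //.
exists (fun z => (fstJ z, sndJ z)) => [[a b] _|z _] /=.
  by rewrite fstJ_pair sndJ_pair.
by rewrite pairJ_fst_snd.
Qed.
End JointPairs.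

Lemma post_chanE (R : numDomainType) m (A B C : 'I_m -> finType)
    (k : chan R {dffun forall i, A i} {dffun forall i, B i})
    (r : forall i, chan R (B i) (C i)) x z :
  post_chan k r x z = \sum_y k x y * \prod_i r i (y i) (z i).
Proof. by rewrite !ffunE. Qed.

Lemma prod_nat_forall (R : numDomainType) (I : finType) (b : I -> bool) :
  \prod_i ((b i)%:R : R) = ([forall i, b i])%:R.
Proof.
have [/forallP allb|] := boolP [forall i, b i].
  by rewrite big1 // => i _; rewrite allb.
rewrite negb_forall => /existsP [i /negbTE bi].
by rewrite (bigD1 i) //= bi mul0r.
Qed.

Lemma is_dist_inhabited (R : numDomainType) (T : finType) (d : {ffun T -> R}) :
  is_dist d -> inhabited T.
Proof.
case=> _ sum1; case: (pickP (fun _ : T => true)) => [t _|T0]; first by constructor.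
by move: sum1; rewrite big_pred0 // => /eqP; rewrite eq_sym oner_eq0.
Qed.

Section FfunUpdate.
Variables (n : nat) (T : finType).

Definition ffun_set (s : {ffun 'I_n -> T}) (k : 'I_n) (t : T) :=
  [ffun j => if j == k then t else s j].

Lemma big_ffun_split_at (R : nmodType) (P : pred {ffun 'I_n -> T}) (k : 'I_n)
    (t0 : T) (F : {ffun 'I_n -> T} -> R) :
  (forall s t, P (ffun_set s k t) = P s) ->
  \sum_(s | P s) F s = \sum_(s | P s && (s k == t0)) \sum_t F (ffun_set s k t).
Proof.
move=> Pset.
rewrite (partition_big (fun s : {ffun 'I_n -> T} => s k) (fun _ => true)) // exchange_big /=.
apply: eq_bigr => t _.
rewrite (reindex_onto (fun s => ffun_set s k t) (fun s => ffun_set s k t0)).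
  apply: eq_bigl => s; rewrite Pset ffunE !eqxx andbT; congr (_ && _).
  apply/eqP/eqP => [<-|skt]; first by rewrite ffunE eqxx.
  by apply/ffunP => j; rewrite !ffunE; case: eqP => // ->.
move=> s /andP[_ /eqP skt]; apply/ffunP => j; rewrite !ffunE.
by case: eqP => // ->; rewrite skt.
Qed.
End FfunUpdate.
Arguments big_ffun_split_at {n T R} P k t0 F.

Section Blocks.
Variables (m n : nat) (A : 'I_m -> finType).

Definition reblk (s : {ffun 'I_n -> {dffun forall i, A i}}) :
  {dffun forall i, blockF n A i} := @finfun 'I_m (fun i => blockF n A i) (blk s).

Lemma blk_unblk (b : {dffun forall i, blockF n A i}) i : blk (unblk b) i = b i.
Proof. by apply/ffunP => l; rewrite !ffunE. Qed.

Lemma unblkK : cancel (@unblk m A n) reblk.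
Proof. by move=> b; apply/ffunP => i; rewrite ffunE blk_unblk. Qed.

Lemma reblkK : cancel reblk (@unblk m A n).
Proof. by move=> s; apply/ffunP => k; apply/ffunP => i; rewrite !ffunE. Qed.
End Blocks.

Lemma ord_lt_neq (n : nat) (a b : 'I_n) : (a < b)%N -> (a == b) = false.
Proof. by move=> ab; apply/eqP => eab; rewrite eab ltnn in ab. Qed.

Section Unrolling.
Variables (R : numDomainType) (m : nat) (W X Y : 'I_m -> finType).
Variable q : chan R {dffun forall i, X i} {dffun forall i, Y i}.
Hypothesis q_chan : is_chan q.
Variable n' : nat.
Local Notation n := n'.+1.
Variable enc : encoders W X Y n.
Hypothesis enc_causal : causal enc.
Variable y0 : {dffun forall i, Y i}.

Local Notation YB := {ffun 'I_n -> {dffun forall i, Y i}}.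
Local Notation WN := {dffun forall i, blockF n W i}.

Fixpoint state (k : nat) : 'I_m -> finType :=
  if k is k'.+1 then pairF (state k') Y else blockF n W.

Fixpoint state_src (k : nat) : forall i, state k i -> {ffun 'I_n -> W i} :=
  match k return forall i, state k i -> {ffun 'I_n -> W i} with
  | 0 => fun i z => z
  | k'.+1 => fun i z => @state_src k' i z.1
  end.

Fixpoint state_outs (k : nat) : forall i, state k i -> seq (Y i) :=
  match k return forall i, state k i -> seq (Y i) with
  | 0 => fun i z => [::]
  | k'.+1 => fun i z => rcons (@state_outs k' i z.1) z.2
  end.

(* The outputs seen so far, padded with y0 to a full block; by causality the
   padding is never read by the encoder. *)
Definition state_outblk k i (z : state k i) : {ffun 'I_n -> Y i} :=
  [ffun j : 'I_n => nth (y0 i) (state_outs z) j].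

Definition state_input k i (z : state k i) : X i :=
  @enc i (inord k) (state_src z) (state_outblk z).

Fixpoint chain (k : nat) : chan R WN {dffun forall i, state k i} :=
  match k return chan R WN {dffun forall i, state k i} with
  | 0 => id_chan R (blockF n W)
  | k'.+1 => tensor_chan (chain k') q (@state_input k')
  end.

Fixpoint state_of (k : nat) (wn : WN) (yb : YB) : {dffun forall i, state k i} :=
  match k return {dffun forall i, state k i} with
  | 0 => wn
  | k'.+1 => pairJ (state_of k' wn yb) (yb (inord k'))
  end.

Lemma xin_prefix wb (yb yb' : YB) (j : 'I_n) :
  (forall l : 'I_n, (l < j)%N -> yb l = yb' l) ->
  xin enc wb yb j = xin enc wb yb' j.
Proof.
move=> eq_pre; apply/ffunP => i; rewrite !ffunE; apply: enc_causal => l lj.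
by rewrite !ffunE eq_pre.
Qed.

Lemma xin_set wb (yb : YB) (k : 'I_n) y (j : 'I_n) :
  (j <= k)%N -> xin enc wb (ffun_set yb k y) j = xin enc wb yb j.
Proof.
move=> jk; apply: xin_prefix => l lj; rewrite ffunE ord_lt_neq //.
exact: leq_trans lj jk.
Qed.

Lemma state_src_of k (wn : WN) (yb : YB) i : state_src (state_of k wn yb i) = wn i.
Proof. by elim: k => [|k IH] //=; rewrite ffunE. Qed.

Lemma state_outs_of k (wn : WN) (yb : YB) i :
  state_outs (state_of k wn yb i) = [seq yb (inord j) i | j <- iota 0 k].
Proof.
elim: k => [|k IH] //.
have iotaS : iota 0 k.+1 = rcons (iota 0 k) k by rewrite -cats1 -addn1 iotaD.
by rewrite iotaS map_rcons -IH /= ffunE.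
Qed.

Lemma state_outblk_of k (wn : WN) (yb : YB) i (j : 'I_n) :
  (j < k)%N -> state_outblk (state_of k wn yb i) j = yb j i.
Proof.
move=> jk; rewrite ffunE state_outs_of (nth_map 0) ?size_iota //.
by rewrite nth_iota // add0n inord_val.
Qed.

Lemma state_of_prefix k (wn : WN) (yb yb' : YB) : (k <= n)%N ->
  (forall l : 'I_n, (l < k)%N -> yb l = yb' l) -> state_of k wn yb = state_of k wn yb'.
Proof.
elim: k => [//|k IH] kn eq_pre /=.
rewrite (IH (ltnW kn)) => [|l lk]; last exact/eq_pre/ltnW.
by rewrite eq_pre // inordK.
Qed.

Lemma state_input_of k (wn : WN) (yb : YB) : (k < n)%N ->
  gmap (@state_input k) (state_of k wn yb) = xin enc (unblk wn) yb (inord k).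
Proof.
move=> kn; apply/ffunP => i; rewrite !ffunE /state_input state_src_of blk_unblk.
apply: enc_causal => l; rewrite inordK // => lk.
by rewrite state_outblk_of // ffunE.
Qed.

(* The output prefixes of length k are represented by the output sequences
   that equal y0 from time k on. *)
Definition padded_from k (yb : YB) := [forall j : 'I_n, (k <= j)%N ==> (yb j == y0)].

Definition out_prefix_prob k wb (yb : YB) : R :=
  \prod_(j < n | (j < k)%N) q (xin enc wb yb j) (yb j).

Lemma padded_from_set k (j : 'I_n) (yb : YB) y :
  (j < k)%N -> padded_from k (ffun_set yb j y) = padded_from k yb.
Proof.
move=> jk; apply: eq_forallb => l; rewrite ffunE.
by case: (l =P j) => [->|//]; rewrite leqNgt jk.
Qed.

Lemma padded_fromS k (yb : YB) : (k < n)%N ->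
  padded_from k.+1 yb && (yb (inord k) == y0) = padded_from k yb.
Proof.
move=> kn; apply/idP/idP.
  move=> /andP[/forallP padS /eqP yk]; apply/forallP => j; apply/implyP.
  rewrite leq_eqVlt => /orP[/eqP kj|]; last exact: (implyP (padS j)).
  have -> : j = inord k by apply/val_inj; rewrite /= inordK.
  by rewrite yk.
move=> /forallP pad; apply/andP; split.
  by apply/forallP => j; apply/implyP => /ltnW; exact: (implyP (pad j)).
by apply: (implyP (pad (inord k))); rewrite inordK.
Qed.

Lemma padded_from0 (yb : YB) : padded_from 0 yb = (yb == [ffun => y0]).
Proof.
apply/forallP/eqP => [pad|->]; last by move=> j; rewrite ffunE eqxx.
by apply/ffunP => j; rewrite ffunE; exact/eqP/(implyP (pad j)).
Qed.

Lemma padded_from_n (yb : YB) : padded_from n yb.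
Proof. by apply/forallP => j; rewrite leqNgt ltn_ord. Qed.

Lemma out_prefix_prob0 wb (yb : YB) : out_prefix_prob 0 wb yb = 1.
Proof. by rewrite /out_prefix_prob big_pred0 // => j; rewrite ltn0. Qed.

Lemma out_prefix_probS k wb (yb : YB) : (k < n)%N ->
  out_prefix_prob k.+1 wb yb =
    out_prefix_prob k wb yb * q (xin enc wb yb (inord k)) (yb (inord k)).
Proof.
move=> kn; rewrite /out_prefix_prob (bigD1 (inord k)) /= ?inordK // mulrC.
congr (_ * _); apply: eq_bigl => j.
rewrite -(inj_eq val_inj) /= inordK //.
by rewrite ltnS ltn_neqAle andbC.
Qed.

Lemma out_prefix_prob_set k wb (yb : YB) (j : 'I_n) y :
  (k <= j)%N -> out_prefix_prob k wb (ffun_set yb j y) = out_prefix_prob k wb yb.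
Proof.
move=> kj; apply: eq_bigr => l lk.
have lj : (l < j)%N by exact: leq_trans lk kj.
by rewrite (xin_set _ _ _ (ltnW lj)) ffunE (ord_lt_neq lj).
Qed.

(* Summing out the channel uses k, ..., n-1 (each contributes a factor 1). *)
Lemma sum_out_prefix_prob wb (H : YB -> R) k :
  (k <= n)%N -> (forall yb yb' : YB, (forall l : 'I_n, (l < k)%N -> yb l = yb' l) ->
                   H yb = H yb') ->
  \sum_(yb | padded_from k yb) out_prefix_prob k wb yb * H yb =
    \sum_yb out_prob q enc wb yb * H yb.
Proof.
move=> kn; have : (k + (n - k) = n)%N by rewrite subnKC.
move: (n - k)%N => d; elim: d k {kn} => [|d IH] k dn H_prefix.
  rewrite addn0 in dn; subst k.
  rewrite (eq_bigl xpredT) => [|yb]; last by rewrite padded_from_n.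
  by apply: eq_bigr => yb _; congr (_ * _); apply: eq_bigl => j; rewrite ltn_ord.
have kn : (k < n)%N by rewrite -dn addnS ltnS leq_addr.
have kk : ((inord k : 'I_n) : nat) = k := inordK kn.
rewrite -(IH k.+1) ?addSnnS // => [|yb yb' eq_pre]; last first.
  by apply: H_prefix => l lk; apply/eq_pre/ltnW.
rewrite [RHS](big_ffun_split_at (padded_from k.+1) (inord k) y0 _); last first.
  by move=> yb y; rewrite padded_from_set // kk.
rewrite [RHS](eq_bigl (padded_from k)) => [|yb]; last by rewrite padded_fromS.
apply: eq_bigr => yb _.
rewrite -[LHS]mulr1 -(q_chan (xin enc wb yb (inord k))).2 big_distrr /=.
apply: eq_bigr => y _.
have k_le : (k <= (inord k : 'I_n))%N by rewrite kk.
rewrite (out_prefix_probS _ _ kn) (out_prefix_prob_set _ _ _ k_le).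
rewrite (xin_set _ _ _ (leqnn _)) ffunE eqxx (H_prefix (ffun_set yb (inord k) y) yb).
  by rewrite mulrAC.
by move=> l lk; rewrite ffunE ord_lt_neq // kk.
Qed.

Lemma sum_chain_padded k : (k <= n)%N -> forall (wn : WN) (G : {dffun forall i, state k i} -> R),
  \sum_z chain k wn z * G z =
    \sum_(yb | padded_from k yb) out_prefix_prob k (unblk wn) yb * G (state_of k wn yb).
Proof.
elim: k => [|k IH] kn wn G.
  rewrite [RHS](big_pred1 [ffun=> y0]) => [|yb]; last by rewrite padded_from0.
  rewrite out_prefix_prob0 mul1r (bigD1 wn) //= big1 ?addr0 => [|z zwn];
    rewrite !ffunE prod_nat_forall.
    by rewrite (_ : [forall i, wn i == wn i]) ?mul1r //; apply/forallP => i.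
  suff -> : [forall i, z i == wn i] = false by rewrite mul0r.
  apply/negbTE; apply: contra zwn => /forallP eqz.
  by apply/eqP/ffunP => i; apply/eqP/eqz.
have kk : (k <= (inord k : 'I_n))%N by rewrite inordK.
rewrite big_pairJ.
transitivity (\sum_a chain k wn a *
                (\sum_b q (gmap (@state_input k) a) b * G (pairJ a b))).
  apply: eq_bigr => a _; rewrite big_distrr /=; apply: eq_bigr => b _.
  by rewrite !ffunE fstJ_pair sndJ_pair mulrA.
rewrite (IH (ltnW kn)).
rewrite [RHS](big_ffun_split_at (padded_from k.+1) (inord k) y0 _); last first.
  by move=> yb y; rewrite padded_from_set // inordK.
rewrite [RHS](eq_bigl (padded_from k)) => [|yb]; last by rewrite padded_fromS.
apply: eq_bigr => yb _; rewrite big_distrr /=; apply: eq_bigr => y _.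
rewrite (state_input_of _ _ kn) (out_prefix_probS _ _ kn) (out_prefix_prob_set _ _ _ kk).
rewrite (xin_set _ _ _ (leqnn _)) ffunE eqxx (@state_of_prefix k _ _ yb (ltnW kn)).
  by rewrite mulrA.
by move=> l lk; rewrite ffunE ord_lt_neq // inordK.
Qed.

(* chain_k is the law of the state after k channel uses. *)
Lemma sum_chain k : (k <= n)%N -> forall (wn : WN) (G : {dffun forall i, state k i} -> R),
  \sum_z chain k wn z * G z =
    \sum_yb out_prob q enc (unblk wn) yb * G (state_of k wn yb).
Proof.
move=> kn wn G; rewrite sum_chain_padded // sum_out_prefix_prob //.
by move=> yb yb' eq_pre; rewrite (state_of_prefix _ kn eq_pre).
Qed.

Lemma out_prob_sum1 wb : \sum_yb out_prob q enc wb yb = 1.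
Proof.
under eq_bigr do rewrite -[out_prob _ _ _ _]mulr1.
rewrite -(@sum_out_prefix_prob _ _ 0) //.
by rewrite (big_pred1 [ffun=> y0]) ?out_prefix_prob0 ?mulr1 // => yb; rewrite padded_from0.
Qed.

Lemma chain_ge0 k wn z : 0 <= chain k wn z.
Proof.
elim: k wn z => [|k IH] wn z /=; rewrite !ffunE.
  by apply: prodr_ge0 => i _; rewrite ler0n.
by apply: mulr_ge0; [exact: IH | exact: (q_chan _).1].
Qed.

Lemma chain_is_chan k : (k <= n)%N -> is_chan (chain k).
Proof.
move=> kn wn; split; first exact: chain_ge0.
under eq_bigr do rewrite -[chain _ _ _]mulr1.
by rewrite sum_chain // -[RHS](out_prob_sum1 (unblk wn)); under eq_bigr do rewrite mulr1.
Qed.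

Lemma induced_chain_input_dist k (p : {ffun {dffun forall i, W i} -> R}) : (k < n)%N ->
  induced_dist (block_source p n) (chain k) (@state_input k) = input_dist p q enc (inord k).
Proof.
move=> kn; apply/ffunP => x; rewrite !ffunE.
rewrite [RHS](reindex (@unblk m W n)); last by exists (@reblk m n W) => b _; rewrite ?unblkK ?reblkK.
apply: eq_bigr => wn _; rewrite sum_chain ?(ltnW kn) // big_distrr /=.
by apply: eq_bigr => yb _; rewrite state_input_of // /proc_prob !ffunE mulrA.
Qed.

Variables (M : 'I_m -> finType) (dec : decoders W Y M n).

Definition decoder_chan i : chan R (state n i) (blockF n M i) :=
  [ffun z => [ffun mi => (@dec i (state_src z) (state_outblk z) == mi)%:R]].

Lemma decoder_chan_is_chan i : is_chan (decoder_chan i).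
Proof.
move=> z; split=> [mi|]; first by rewrite !ffunE ler0n.
rewrite (bigD1 (@dec i (state_src z) (state_outblk z))) //= !ffunE eqxx big1 ?addr0 //.
by move=> mi /negbTE; rewrite !ffunE eq_sym => ->.
Qed.

Lemma code_chan_post_chain : code_chan q enc dec = post_chan (chain n) decoder_chan.
Proof.
apply/ffunP => wn; apply/ffunP => mh; rewrite post_chanE /code_chan ffunE ffunE sum_chain //.
apply: eq_bigr => yb _; congr (_ * _).
under eq_bigr => i _ do rewrite ffunE ffunE state_src_of.
have outblk i : state_outblk (state_of n wn yb i) = blk yb i.
  by apply/ffunP => l; rewrite state_outblk_of // ffunE.
rewrite prod_nat_forall; congr (nat_of_bool _ )%:R.
apply/eqP/forallP => [<- i|eq_dec]; first by rewrite outblk ffunE.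
by apply/ffunP => i; rewrite ffunE -outblk; apply/eqP/eq_dec.
Qed.
End Unrolling.

Lemma block_source_dist (R : numDomainType) m (W : 'I_m -> finType)
    (p : {ffun {dffun forall i, W i} -> R}) n :
  is_dist p -> is_dist (block_source p n).
Proof.
move=> [p_ge0 p_sum1]; split=> [wn|]; first by rewrite ffunE prodr_ge0.
rewrite (reindex (@reblk m n W)); last by exists (@unblk m W n) => s _; rewrite ?unblkK ?reblkK.
transitivity (\sum_(wb : {ffun 'I_n -> {dffun forall i, W i}}) \prod_(k < n) p (wb k)).
  apply: eq_bigr => wb _; rewrite ffunE; apply: eq_bigr => k _; congr (p _).
  by apply/ffunP => i; rewrite !ffunE.
by rewrite -(bigA_distr_bigA (fun _ w => p w)) big1 // => k _; rewrite p_sum1.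
Qed.

Local Open Scope classical_set_scope.

Lemma sum_in_vscale_conv_hull (R : numFieldType) c (K : set 'rV[R]_c)
    (s : seq 'rV[R]_c) :
  (0 < size s)%N -> (forall u, u \in s -> K u) ->
  vscale (size s)%:R (conv_hull K) (\sum_(u <- s) u).
Proof.
set n := size s => n_gt0 sK.
have n_neq0 : (n%:R : R) != 0 by rewrite pnatr_eq0 -lt0n.
exists (\sum_(j < n) n%:R^-1 *: s`_j).
  exists n, (fun => n%:R^-1), (fun j => s`_j); split; first by move=> j; rewrite invr_ge0.
  split; first by rewrite sumr_const card_ord -[_ *+ _]mulr_natr mulVf.
  by split=> // j; apply/sK/mem_nth.
rewrite scaler_sumr (big_nth 0) big_mkord; apply: eq_bigr => j _.
by rewrite scalerA mulfV // scale1r.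
Qed.

Section PhiOfChain.
Variables (R : numDomainType) (m c : nat) (phi : phi_type R m c).
Hypotheses (phi1 : phi_prop1 phi) (phi2 : phi_prop2 phi).
Variables (W X Y : 'I_m -> finType).
Variable q : chan R {dffun forall i, X i} {dffun forall i, Y i}.
Hypothesis q_chan : is_chan q.
Variables (p : {ffun {dffun forall i, W i} -> R}) (Psi : set {ffun {dffun forall i, X i} -> R}).
Hypotheses (p_dist : is_dist p) (Psi_perm : permissible p q Psi).
Variables (n' : nat) (enc : encoders W X Y n'.+1) (y0 : {dffun forall i, Y i}).
Hypothesis enc_causal : causal enc.

Lemma phi_chain_sum k : (k <= n'.+1)%N -> forall v,
  phi (chain q enc y0 k) [set block_source p n'.+1] v ->
  exists s : seq 'rV[R]_c,
    [/\ size s = k, forall u, u \in s -> phi q Psi u & v = \sum_(u <- s) u].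
Proof.
have src_dist := block_source_dist n'.+1 p_dist.
case: Psi_perm => Psi_dist Psi_input.
elim: k => [|k IH] kn v.
  by rewrite /= phi2 // => ->; exists [::]; rewrite big_nil.
have input_in_Psi : Psi (induced_dist (block_source p n'.+1) (chain q enc y0 k)
                                      (@state_input _ _ _ _ _ enc y0 k)).
  by rewrite induced_chain_input_dist //; exact: Psi_input.
move=> /(phi1 (chain_is_chan q_chan enc_causal y0 (ltnW kn)) q_chan src_dist
              Psi_dist input_in_Psi) [v1 [v2 [phi_v1 [phi_v2 ->]]]].
have [s [size_s s_phi ->]] := IH (ltnW kn) v1 phi_v1.
exists (v2 :: s); split; [by rewrite /= size_s | | by rewrite big_cons addrC].
by move=> u; rewrite inE => /orP[/eqP->|/s_phi].
Qed.
End PhiOfChain.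

Theorem lemma1 (R : realType) (m c : nat) (phi : phi_type R m c)
  (Hnonneg : phi_nonneg phi) (H1 : phi_prop1 phi) (H2 : phi_prop2 phi)
  (H3 : phi_prop3 phi)
  (W X Y M : 'I_m -> finType)
  (q : chan R {dffun forall i, X i} {dffun forall i, Y i}) (Hq : is_chan q)
  (p : {ffun {dffun forall i, W i} -> R}) (Hp : is_dist p)
  (f : forall i : 'I_m, {dffun forall j, W j} -> M i)
  (Delta : forall i : 'I_m, M i -> M i -> R)
  (HDelta : forall (i : 'I_m) (a : M i), Delta i a a = 0)
  (D : 'I_m -> R) (eps : R) (Heps : 0 < eps)
  (n : nat) (Hn : (0 < n)%N)
  (enc : encoders W X Y n) (Henc : causal enc) (dec : decoders W Y M n)
  (Hdist : forall i : 'I_m,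
     exp_distortion p q enc dec f Delta i <= D i + eps)
  (Psi : set {ffun {dffun forall i, X i} -> R}) (HPsi : permissible p q Psi) :
  phi (blockF n W) (blockF n M) (code_chan q enc dec) [set block_source p n]
    `<=` vscale n%:R (conv_hull (phi X Y q Psi)).
Proof.
move: enc Henc dec {Hdist}; case: n Hn => [//|n'] _ enc Henc dec.
have [x0] := is_dist_inhabited (HPsi.1 _ (HPsi.2 _ enc Henc ord0)).
have [y0] := is_dist_inhabited (Hq x0).
rewrite (code_chan_post_chain Hq Henc y0 dec) => v.
move=> /(H3 _ _ _ _ _ (chain_is_chan Hq Henc y0 (leqnn _)) (decoder_chan_is_chan R y0 dec)
           _ (block_source_dist _ Hp)) phi_v.
have [s [size_s s_phi ->]] := phi_chain_sum H1 H2 Hq Hp HPsi Henc (leqnn _) phi_v.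
by rewrite -size_s; apply: sum_in_vscale_conv_hull; rewrite ?size_s.
Qed.
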